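(* For every $n\ge1$, the number of permutations $\pi$ of $\{1,\dots,n\}$ whose Schröder insertion tableau $P(\pi)$ consists of a single column (every row has at most $2$ cells) is $2^{n-1}$.
   Context: A Schröder tableau consists of rows $1,2,\dots$; row $r$ has $\lambda_r$ cells at positions $1,\dots,\lambda_r$, each filled with a number; cells at odd positions are upper triangles, at even positions lower triangles. The Schröder insertion tableau $P(\pi)$ of $\pi=\pi_1\cdots\pi_n$ is built as follows. Start with $P$ having one row containing $\pi_1$. For $k=2,\dots,n$, insert $\alpha=\pi_k$ into row $i=1$ by the rule: if row $i$ is empty or $\alpha$ is larger than all its entries, place $\alpha$ in a new cell at the end of row $i$ and stop. Otherwise let $j$ be the position in row $i$ of the smallest entry larger than $\alpha$. If $j$ is even: remove the entry $\beta$ at position $j$, write $\alpha$ there, and insert $\beta$ into row $i+1$ by the same rule. If $j$ is odd and position $j+1$ exists in row $i$ with entry $\beta$: move the entry of position $j$ to position $j+1$, write $\alpha$ at position $j$, and insert $\beta$ into row $i+1$. If $j$ is odd and is the last position of row $i$: move the entry of position $j$ into a new cell at position $j+1$ at the end of row $i$, write $\alpha$ at position $j$, and stop. The final $P$ is $P(\pi)$. *)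

From mathcomp Require Import all_boot all_fingroup.
Set Implicit Arguments. Unset Strict Implicit. Unset Printing Implicit Defensive.

(* A Schröder tableau is a list of rows; row r is the list of its entries at
   positions 1, 2, ..., lambda_r (stored 0-based: position j is index j-1).
   Odd positions are upper triangles, even positions lower triangles. *)
Definition stableau := seq (seq nat).

(* 0-based index in row [r] of the smallest entry larger than [a]
   (meaningful only when such an entry exists). *)
Definition smallest_larger_idx (r : seq nat) (a : nat) : nat :=
  let gt := [seq x <- r | a < x] in
  index (foldr minn (head 0 gt) gt) r.

Fixpoint sinsert (P : stableau) (a : nat) : stableau :=
  match P with
  | [::] => [:: [:: a]]
  | r :: P' =>
    if all (fun x => x < a) r then rcons r a :: P'
    else
      let j0 := smallest_larger_idx r a in   (* position j = j0 + 1 *)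
      if odd j0 then
        (* j even: bump entry at position j *)
        set_nth 0 r j0 a :: sinsert P' (nth 0 r j0)
      else if j0.+1 < size r then
        (* j odd, position j+1 exists with entry beta *)
        set_nth 0 (set_nth 0 r j0 a) j0.+1 (nth 0 r j0)
          :: sinsert P' (nth 0 r j0.+1)
      else
        (* j odd and last position: shift into new cell, stop *)
        rcons (set_nth 0 r j0 a) (nth 0 r j0) :: P'
  end.

Definition schroderP (pi : seq nat) : stableau :=
  match pi with
  | [::] => [::]
  | x :: s => foldl sinsert [:: [:: x]] s
  end.

Definition single_column (P : stableau) : bool := all (fun r => size r <= 2) P.

Definition perm_word n (s : 'S_n) : seq nat := [seq (s i).+1 | i <- enum 'I_n].

From mathcomp Require Import all_boot all_fingroup zify.

(* A single-column tableau is the increasing list of its entries cut into rows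
   of two.  Inserting a into such a tableau keeps this shape as long as a is
   smaller than the second smallest entry: a settles in the first row and the
   entry it displaces moves down.  Otherwise a is appended to the first row,
   which then has three cells, and rows never shrink under insertion.  Hence
   P(pi) is a single column exactly when every letter of pi exceeds at most one
   earlier letter.  In such a permutation of 1..n+1 the letter n+1 stands first
   or second, and deleting it gives such a permutation of 1..n; conversely both
   placements of n+1 are allowed, so the count doubles with each letter. *)

Fixpoint insert_sorted (a : nat) (s : seq nat) : seq nat :=
  if s is x :: s' then (if a < x then a :: s else x :: insert_sorted a s')
  else [:: a].

Lemma perm_insert_sorted a s : perm_eq (insert_sorted a s) (a :: s).
Proof.
elim: s => [|x s IH] //=; case: ifP => // _.
by rewrite -(perm_cons x) in IH; rewrite (permPl IH) (perm_catCA [:: x] [:: a]).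
Qed.

Lemma sorted_insert_sorted a s :
  sorted ltn s -> a \notin s -> sorted ltn (insert_sorted a s).
Proof.
elim: s => [|x s IH] //= s_sorted; rewrite inE negb_or => /andP [a_neq_x a_notin_s].
case: ifP => a_lt_x /=; first by rewrite a_lt_x s_sorted.
move: s_sorted; rewrite !(path_sortedE ltn_trans) => /andP [x_lt_s s_sorted].
rewrite IH // (perm_all _ (perm_insert_sorted a s)) /= x_lt_s !andbT.
by rewrite ltn_neqAle eq_sym a_neq_x leqNgt a_lt_x.
Qed.

Lemma insert_sorted_head {a s} : path ltn a s -> insert_sorted a s = a :: s.
Proof. by case: s => [|x s] //= /andP [->]. Qed.

Lemma count_lt_path {y s a} : path ltn y s -> a <= y ->
  count (fun z => z < a) s = 0.
Proof.
rewrite (path_sortedE ltn_trans) => /andP [y_lt_s _] a_le_y.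
apply/eqP; rewrite -leqn0 leqNgt -has_count; apply/hasPn => z /(allP y_lt_s).
by move=> y_lt_z; rewrite -leqNgt (leq_trans a_le_y (ltnW y_lt_z)).
Qed.

Lemma count_lt_le1_sorted {x y s a} : sorted ltn [:: x, y & s] -> a != y ->
  (count (fun z => z < a) [:: x, y & s] <= 1) = (a < y).
Proof.
move=> /= /andP [x_lt_y y_s_sorted] a_neq_y.
have [y_lt_a | a_lt_y | y_eq_a] := ltngtP y a; last by rewrite y_eq_a eqxx in a_neq_y.
- by rewrite /= (ltn_trans x_lt_y y_lt_a); lia.
- by rewrite /= (count_lt_path y_s_sorted (ltnW a_lt_y)); case: (x < a).
Qed.

Fixpoint column_tableau (s : seq nat) : stableau :=
  match s with
  | [::] => [::]
  | [:: x] => [:: [:: x]]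
  | x :: y :: s' => [:: x; y] :: column_tableau s'
  end.

Lemma single_column_column_tableau s : single_column (column_tableau s).
Proof.
have [n] := ubnP (size s); elim: n s => // n IH [|x [|y s]] //= size_s.
by apply: IH; lia.
Qed.

Lemma sinsert_column_tableau s a : sorted ltn s -> a \notin s ->
  count (fun z => z < a) s <= 1 ->
  sinsert (column_tableau s) a = column_tableau (insert_sorted a s).
Proof.
have [n] := ubnP (size s); elim: n s a => // n IH [|x [|y s]] a size_s s_sorted //.
- rewrite inE => a_neq_x _ /=; rewrite /smallest_larger_idx /= andbT.
  have [x_lt_a | a_lt_x | x_eq_a] := ltngtP x a => //=.
  + by rewrite minnn eqxx.
  + by rewrite x_eq_a eqxx in a_neq_x.
rewrite !inE !negb_or => /and3P [a_neq_x a_neq_y _].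
rewrite (count_lt_le1_sorted s_sorted a_neq_y) => a_lt_y.
have [x_lt_y y_s_sorted] : x < y /\ path ltn y s by case/andP: s_sorted.
have insert_y : sinsert (column_tableau s) y = column_tableau (y :: s).
  have /andP [y_lt_s s_sorted'] : all (ltn y) s && sorted ltn s.
    by rewrite -(path_sortedE ltn_trans).
  rewrite -(insert_sorted_head y_s_sorted); apply: IH => //; first exact: ltnW size_s.
  - by apply/negP => /(allP y_lt_s) /=; rewrite ltnn.
  - by rewrite (count_lt_path y_s_sorted).
rewrite /= /smallest_larger_idx /= a_lt_y (ltnNge y a) (ltnW a_lt_y) andbF /=.
have [x_lt_a | a_lt_x | x_eq_a] := ltngtP x a.
- by rewrite /= minnn (ltn_eqF x_lt_y) eqxx /= insert_y.
- by rewrite /= (minn_idPr (ltnW x_lt_y)) minnn eqxx /= insert_y.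
- by rewrite x_eq_a eqxx in a_neq_x.
Qed.

Lemma sinsert_column_tableau_overflow s a : sorted ltn s -> a \notin s ->
  1 < count (fun z => z < a) s -> ~~ single_column (sinsert (column_tableau s) a).
Proof.
case: s => [|x [|y s]] s_sorted //; first by move=> _ /=; case: (x < a).
rewrite !inE !negb_or => /and3P [_ a_neq_y _].
rewrite ltnNge (count_lt_le1_sorted s_sorted a_neq_y) -leqNgt => y_le_a.
have y_lt_a : y < a by rewrite ltn_neqAle eq_sym a_neq_y.
case/andP: s_sorted => x_lt_y _.
by rewrite /= (ltn_trans x_lt_y y_lt_a) y_lt_a.
Qed.

Lemma single_column_of_sinsert P a : single_column (sinsert P a) -> single_column P.
Proof.
elim: P a => [|r P IH] a //=.
case: ifP => _ /=; [|case: ifP => _ /=; [|case: ifP => _ /=]];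
  rewrite ?size_rcons ?size_set_nth => /andP [r_small P_sc];
  (* [P_sc] is about [P] when insertion stops, about [sinsert P _] when it bumps *)
  rewrite ?P_sc ?(IH _ P_sc) andbT; lia.
Qed.

(* Every letter of [s] exceeds at most one letter read before it, [p] being
   the letters read before [s]; [few_smaller w] says that [w] avoids the
   patterns 123 and 213. *)
Fixpoint few_smaller_after (p s : seq nat) : bool :=
  if s is a :: s' then (count (fun x => x < a) p <= 1) && few_smaller_after (rcons p a) s'
  else true.

Definition few_smaller (w : seq nat) : bool := few_smaller_after [::] w.

Lemma few_smaller_after_cat p s t :
  few_smaller_after p (s ++ t) = few_smaller_after p s && few_smaller_after (p ++ s) t.
Proof.
elim: s p => [|a s IH] p /=; first by rewrite cats0.
by rewrite IH cat_rcons andbA.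
Qed.

Lemma few_smaller_rcons w a :
  few_smaller (rcons w a) = few_smaller w && (count (fun x => x < a) w <= 1).
Proof. by rewrite /few_smaller -cats1 few_smaller_after_cat /= andbT. Qed.

Lemma schroder_fold_few_smaller {x s} : uniq (x :: s) -> few_smaller (x :: s) ->
  exists t, [/\ sorted ltn t, perm_eq t (x :: s)
                & foldl sinsert [:: [:: x]] s = column_tableau t].
Proof.
elim/last_ind: s => [|s a IH]; first by exists [:: x].
rewrite -rcons_cons rcons_uniq few_smaller_rcons foldl_rcons.
move=> /andP [a_notin u_s] /andP [fs_s small_a].
have [t [t_sorted t_perm ->]] := IH u_s fs_s.
have a_notin_t : a \notin t by rewrite (perm_mem t_perm).
exists (insert_sorted a t); split.
- exact: sorted_insert_sorted.
- by rewrite (permPl (perm_insert_sorted a t)) perm_sym perm_rcons perm_cons perm_sym.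
- by rewrite sinsert_column_tableau // (seq.permP t_perm).
Qed.

Lemma schroder_fold_overflow {x s} : uniq (x :: s) -> ~~ few_smaller (x :: s) ->
  ~~ single_column (foldl sinsert [:: [:: x]] s).
Proof.
elim/last_ind: s => [|s a IH] //.
rewrite -rcons_cons rcons_uniq few_smaller_rcons foldl_rcons negb_and.
move=> /andP [a_notin u_s]; have [fs_s big_a|fs_s _] := boolP (few_smaller (x :: s)).
- have [t [t_sorted t_perm ->]] := schroder_fold_few_smaller u_s fs_s.
  apply: sinsert_column_tableau_overflow => //; first by rewrite (perm_mem t_perm).
  by rewrite (seq.permP t_perm) ltnNge.
- by apply: contra (IH u_s fs_s); apply: single_column_of_sinsert.
Qed.

Lemma single_column_schroderP w : uniq w -> single_column (schroderP w) = few_smaller w.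
Proof.
case: w => [|x s] // u_w; apply/idP/idP; last first.
  case/(schroder_fold_few_smaller u_w) => t [_ _ /= ->].
  exact: single_column_column_tableau.
by apply: contraLR; apply: schroder_fold_overflow.
Qed.

Lemma few_smaller_after_max M v p q : all (fun y => y < M) v ->
  few_smaller_after (p ++ M :: q) v = few_smaller_after (p ++ q) v.
Proof.
elim: v p q => [|a v IH] //= p q /andP [a_lt_M v_lt_M].
rewrite !count_cat /= ltnNge (ltnW a_lt_M) add0n.
by rewrite !rcons_cat rcons_cons IH.
Qed.

Lemma few_smaller_max_head M v : all (fun y => y < M) v ->
  few_smaller (M :: v) = few_smaller v.
Proof.
by move=> v_lt_M; rewrite /few_smaller /= (few_smaller_after_max _ _ [::] [::] v_lt_M).
Qed.

Lemma few_smaller_max_second M x v : all (fun y => y < M) v ->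
  few_smaller [:: x, M & v] = few_smaller (x :: v).
Proof.
move=> v_lt_M; rewrite /few_smaller /= (few_smaller_after_max _ _ [:: x] [::] v_lt_M).
by rewrite cats0; case: (x < M).
Qed.

Lemma few_smaller_late_max M a b p q : a < M -> b < M ->
  few_smaller [:: a, b & p ++ M :: q] = false.
Proof.
move=> a_lt_M b_lt_M; rewrite /few_smaller -cat_cons -cat_cons few_smaller_after_cat.
by rewrite /= a_lt_M b_lt_M !add1n /= andbF.
Qed.

Lemma all_lt_perm_iota {m v} : perm_eq v (iota 1 m) -> all (fun y => y < m.+1) v.
Proof.
move=> v_perm; rewrite (perm_all _ v_perm); apply/allP => y.
by rewrite mem_iota add1n => /andP [_].
Qed.

Lemma perm_iota_cons_max m v :
  perm_eq (m.+1 :: v) (iota 1 m.+1) = perm_eq v (iota 1 m).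
Proof.
rewrite -(addn1 m) iotaD perm_sym perm_catC /= add1n addn1.
by rewrite perm_cons perm_sym.
Qed.

Lemma perm_iota_second_max m x v :
  perm_eq [:: x, m.+1 & v] (iota 1 m.+1) = perm_eq (x :: v) (iota 1 m).
Proof.
rewrite -(perm_iota_cons_max m (x :: v)).
exact: (perm_catCA [:: x] [:: m.+1] v).
Qed.

Lemma few_smaller_perm_iota_max {m w} : perm_eq w (iota 1 m.+2) -> few_smaller w ->
  exists2 v, perm_eq v (iota 1 m.+1) && few_smaller v &
    w = m.+2 :: v \/ w = head 0 v :: m.+2 :: behead v.
Proof.
move=> w_perm w_fs; have w_le_max := all_lt_perm_iota w_perm.
case: w w_perm w_fs w_le_max => [|a [|b r]] w_perm w_fs w_le_max;
  try by move/perm_size: w_perm; rewrite size_iota.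
have [a_eq_max | a_neq_max] := eqVneq a m.+2.
  exists (b :: r); last by left; rewrite a_eq_max.
  move: w_perm w_fs; rewrite a_eq_max perm_iota_cons_max => br_perm.
  by rewrite few_smaller_max_head ?all_lt_perm_iota // => ->; rewrite andbT.
have [b_eq_max | b_neq_max] := eqVneq b m.+2.
  exists (a :: r); last by right; rewrite b_eq_max.
  move: w_perm w_fs; rewrite b_eq_max perm_iota_second_max => ar_perm.
  have /andP [_ r_lt_max] := all_lt_perm_iota ar_perm.
  by rewrite few_smaller_max_second // => ->; rewrite andbT.
have max_in_r : m.+2 \in r.
  move: (perm_mem w_perm m.+2); rewrite mem_iota !inE.
  by rewrite eq_sym (negbTE a_neq_max) eq_sym (negbTE b_neq_max) add1n ltnSn => /= ->.
move: w_fs w_le_max; case/splitPr: max_in_r => p q w_fs /and3P [a_le_max b_le_max _].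
by rewrite few_smaller_late_max ?ltn_neqAle ?a_neq_max ?b_neq_max in w_fs.
Qed.

(* [few_smaller_perms n] lists words of length [n.+1]. *)
Fixpoint few_smaller_perms n : seq (seq nat) :=
  if n is m.+1 then
    [seq m.+2 :: w | w <- few_smaller_perms m] ++
    [seq head 0 w :: m.+2 :: behead w | w <- few_smaller_perms m]
  else [:: [:: 1]].

Lemma mem_few_smaller_perms n w :
  (w \in few_smaller_perms n) = perm_eq w (iota 1 n.+1) && few_smaller w.
Proof.
elim: n w => [|n IH] w.
  rewrite inE; apply/eqP/andP => [-> // | [w_perm _]].
  exact: perm_small_eq w_perm.
rewrite mem_cat; apply/orP/andP => [|[w_perm w_fs]]; last first.
  have [v v_ok [->|->]] := few_smaller_perm_iota_max w_perm w_fs;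
    [left | right]; by apply: map_f; rewrite IH.
case=> /mapP [[|x v]]; rewrite IH => /andP [v_perm v_fs] ->;
  try by move/perm_size: v_perm; rewrite size_iota.
- by rewrite perm_iota_cons_max v_perm few_smaller_max_head ?all_lt_perm_iota.
- have /andP [_ v_lt_max] := all_lt_perm_iota v_perm.
  by rewrite perm_iota_second_max v_perm few_smaller_max_second.
Qed.

Lemma size_few_smaller_perms n : size (few_smaller_perms n) = 2 ^ n.
Proof. by elim: n => [|n IH] //=; rewrite size_cat !size_map IH expnS mul2n addnn. Qed.

Lemma uniq_few_smaller_perms n : uniq (few_smaller_perms n).
Proof.
elim: n => [|n IH] //=.
have head_lt v : v \in few_smaller_perms n -> exists2 x, x < n.+2 & v = x :: behead v.
  rewrite mem_few_smaller_perms => /andP [v_perm _].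
  case: v v_perm => [|x v] v_perm; first by move/perm_size: v_perm; rewrite size_iota.
  by exists x => //; case/andP: (all_lt_perm_iota v_perm).
rewrite cat_uniq map_inj_uniq // ?IH; last by move=> ? ? [].
rewrite map_inj_in_uniq ?IH ?andbT; last first.
  by move=> u v /head_lt [x _ ->] /head_lt [y _ ->] /= [-> ->].
apply/hasPn => _ /mapP [v /head_lt [x x_lt ->] ->]; apply/mapP => [[u _ [x_eq _]]].
by rewrite x_eq ltnn in x_lt.
Qed.

Lemma perm_word_inj n : injective (@perm_word n).
Proof.
move=> s t /eq_in_map s_eq_t; apply/permP => i; apply/val_inj/succn_inj.
by apply: s_eq_t; rewrite mem_enum.
Qed.

Lemma perm_word_iota {n} (s : 'S_n) : perm_eq (perm_word s) (iota 1 n).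
Proof.
apply: (uniq_perm _ (iota_uniq 1 n)).
  by rewrite map_inj_uniq ?enum_uniq // => i j /succn_inj /val_inj /perm_inj.
move=> [|k]; rewrite mem_iota /=; first by apply/mapP => -[].
rewrite add1n ltnS; apply/mapP/idP => [[i _ [->]] // | k_lt_n].
by exists (s^-1 (Ordinal k_lt_n))%g; rewrite ?mem_enum ?permKV.
Qed.

Lemma perm_word_surj {n w} : perm_eq w (iota 1 n) -> exists s : 'S_n, perm_word s = w.
Proof.
move=> w_perm; have size_w : size w = n by rewrite (perm_size w_perm) size_iota.
(* the default [i] of [insubd] is never used, as the letters of [w] lie in 1..n *)
pose f (i : 'I_n) : 'I_n := insubd i (nth 0 w i).-1.
have f_val i : (f i).+1 = nth 0 w i.
  have := perm_mem w_perm (nth 0 w i); rewrite mem_nth ?size_w // mem_iota add1n.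
  by rewrite /f val_insubd; case: (nth 0 w i) => //= k; rewrite ltnS => <-.
have f_inj : injective f.
  move=> i j /(congr1 (fun k : 'I_n => (val k).+1)); rewrite !f_val => /eqP.
  have w_uniq : uniq w by rewrite (perm_uniq w_perm) iota_uniq.
  by rewrite nth_uniq ?size_w // => /eqP /val_inj.
exists (perm f_inj); rewrite /perm_word (eq_map (g := nth 0 w \o val)) => [|i].
  by rewrite map_comp val_enum_ord -size_w -/(mkseq _ _) mkseq_nth.
by rewrite /= permE f_val.
Qed.

Theorem mainTheorem10 (n : nat) : 0 < n ->
  #|[set s : 'S_n | single_column (schroderP (perm_word s))]| = 2 ^ (n - 1).
Proof.
case: n => [|n] // _; rewrite subn1 -(size_few_smaller_perms n) cardE.
rewrite -(size_map (@perm_word n.+1)); apply/perm_size/uniq_perm.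
- by rewrite map_inj_uniq ?enum_uniq //; apply: perm_word_inj.
- exact: uniq_few_smaller_perms.
have schroderP_perm_word (s : 'S_n.+1) :
    single_column (schroderP (perm_word s)) = few_smaller (perm_word s).
  by rewrite single_column_schroderP // (perm_uniq (perm_word_iota s)) iota_uniq.
move=> w; rewrite mem_few_smaller_perms; apply/mapP/andP => [[s] | [w_perm w_fs]].
  by rewrite mem_enum inE schroderP_perm_word => s_fs ->; rewrite perm_word_iota.
have [s s_w] := perm_word_surj w_perm.
by exists s; rewrite // mem_enum inE schroderP_perm_word s_w.
Qed.
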